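(* Let $T$ be a linear transformation of a finite-dimensional real vector space $W$, and assume $W$ splits as a direct sum of (real) eigenspaces of $T$ with eigenvalues $\neq\pm1$. Let $W^+,W^-\subseteq W$ be subspaces with $\dim W^++\dim W^-=\dim W$ such that $W^+$ has zero intersection with the contracting subspace of $W$ and $W^-$ has zero intersection with the expanding subspace of $W$ determined by $T$. Then there is $K$ such that whenever $k^+,k^-$ are nonnegative integers with $k^++k^-\geq K$, $$W=T^{k^+}W^+\oplus T^{-k^-}W^-,$$ and moreover this decomposition is uniformly transverse in $k^\pm$: for a fixed inner product on $W$ there is $\epsilon>0$ such that for all such $k^\pm$, any unit vector in $T^{k^+}W^+$ and any unit vector in $T^{-k^-}W^-$ make an angle at least $\epsilon$.
   Context: The contracting (resp. expanding) subspace of $W$ determined by $T$ is the sum of the eigenspaces of $T$ whose eigenvalues have absolute value $<1$ (resp. $>1$). *)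

(* W = 'rV[R]_n, R : realType; linear maps act on row vectors
   by v |-> v *m T; subspaces are represented by matrices (row spaces, %MS). *)
From HB Require Import structures.
From mathcomp Require Import all_boot all_order all_algebra.
From mathcomp Require Import reals trigo.
Set Implicit Arguments. Unset Strict Implicit. Unset Printing Implicit Defensive.
Import Order.TTheory GRing.Theory Num.Theory.
Local Open Scope ring_scope.

Definition in_eigen_sum {R : fieldType} {n : nat} (P : R -> bool)
  (T : 'M[R]_n) (v : 'rV[R]_n) : Prop :=
  exists s : seq R, all P s /\ (v <= \sum_(a <- s) eigenspace T a)%MS.

Definition in_contracting {R : realType} {n : nat} (T : 'M[R]_n) (v : 'rV[R]_n) : Prop :=
  in_eigen_sum (fun a : R => `|a| < 1) T v.

Definition in_expanding {R : realType} {n : nat} (T : 'M[R]_n) (v : 'rV[R]_n) : Prop :=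
  in_eigen_sum (fun a : R => 1 < `|a|) T v.

Definition ip {R : pzRingType} {n : nat} (M : 'M[R]_n) (u w : 'rV[R]_n) : R :=
  (u *m M *m w^T) 0 0.

Definition inner_product_mx {R : realType} {n : nat} (M : 'M[R]_n) : Prop :=
  M^T = M /\ forall v : 'rV[R]_n, v != 0 -> 0 < ip M v v.

(* unoriented angle between vectors u, w (for unit vectors w.r.t. M) *)
Definition angle {R : realType} {n : nat} (M : 'M[R]_n) (u w : 'rV[R]_n) : R :=
  acos (ip M u w).

(* Split W into the expanding and contracting sums E and C of eigenspaces of
   T: then T^k shrinks C, and T^-k shrinks E, by a geometric factor r^k.
   Since W+ meets C trivially, the C-component of a vector of W+ is bounded by
   its E-component, so on T^k+ W+ the C-component is at most r^k+ times the
   E-component; symmetrically on T^-k- W- the E-component is at most r^k- times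
   the C-component.  When k+ + k- is large, one of these two cones is thin and
   the other has bounded aperture, which keeps them uniformly apart for the
   adapted norm |v_E|^2 + |v_C|^2, hence for every inner product.  Uniform
   transversality gives the trivial intersection, and the dimension count
   gives the direct sum. *)

From mathcomp Require Import all_boot all_order all_algebra.
From mathcomp Require Import reals trigo topology normedtype sequences.
From mathcomp Require Import ring lra.
Set Implicit Arguments. Unset Strict Implicit. Unset Printing Implicit Defensive.
Import Order.TTheory GRing.Theory Num.Theory numFieldNormedType.Exports.
Local Open Scope ring_scope.

Section InnerProduct.
Variables (R : realType) (n : nat).
Implicit Types (M X : 'M[R]_n) (u v w : 'rV[R]_n).

Lemma ipDl M u v w : ip M (u + v) w = ip M u w + ip M v w.
Proof. by rewrite /ip !mulmxDl mxE. Qed.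

Lemma ipDr M u v w : ip M u (v + w) = ip M u v + ip M u w.
Proof. by rewrite /ip linearD /= mulmxDr mxE. Qed.

Lemma ipZl M a u w : ip M (a *: u) w = a * ip M u w.
Proof. by rewrite /ip -!scalemxAl mxE. Qed.

Lemma ipZr M a u w : ip M u (a *: w) = a * ip M u w.
Proof. by rewrite /ip linearZ /= -scalemxAr mxE. Qed.

Lemma ipNl M u w : ip M (- u) w = - ip M u w.
Proof. by rewrite -scaleN1r ipZl mulN1r. Qed.

Lemma ipNr M u w : ip M u (- w) = - ip M u w.
Proof. by rewrite -scaleN1r ipZr mulN1r. Qed.

Lemma ip0l M w : ip M 0 w = 0.
Proof. by rewrite /ip !mul0mx mxE. Qed.

Lemma ip_sym M u w : M^T = M -> ip M u w = ip M w u.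
Proof.
move=> sym_M; have trE (A : 'M[R]_1) : A 0 0 = A^T 0 0 by rewrite mxE.
by rewrite /ip trE !trmx_mul trmxK sym_M mulmxA.
Qed.

Lemma ip_ge0 M v : inner_product_mx M -> 0 <= ip M v v.
Proof.
case=> _ pos_M; have [->|nz_v] := eqVneq v 0; first by rewrite ip0l.
exact/ltW/pos_M.
Qed.

Lemma ip_Cauchy_Schwarz M u w : inner_product_mx M ->
  ip M u w ^+ 2 <= ip M u u * ip M w w.
Proof.
move=> ipM; have [->|nz_u] := eqVneq u 0; first by rewrite !ip0l expr0n /= mul0r.
have uu_gt0 : 0 < ip M u u by case: ipM => _ /(_ u nz_u).
suff : 0 <= (ip M u u * ip M w w - ip M u w ^+ 2) / ip M u u.
  by rewrite pmulr_lge0 ?invr_gt0 // subr_ge0.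
set t := ip M u w / ip M u u.
suff -> : (ip M u u * ip M w w - ip M u w ^+ 2) / ip M u u
        = ip M (w - t *: u) (w - t *: u) by exact: ip_ge0.
rewrite !(ipDl, ipDr, ipNl, ipNr, ipZl, ipZr) (ip_sym w u ipM.1) /t.
by field; rewrite gt_eqF.
Qed.

Lemma ip_unitmx M : inner_product_mx M -> M \in unitmx.
Proof.
case=> _ pos_M; rewrite -row_free_unit -kermx_eq0; apply/rowV0P => v /sub_kermxP vM0.
apply/eqP/negPn/negP => /pos_M.
by rewrite /ip vM0 mul0mx mxE ltxx.
Qed.

Definition sqnorm v := ip 1%:M v v.

Lemma ip1_sym u w : ip 1%:M u w = ip 1%:M w u.
Proof. exact/ip_sym/tr_scalar_mx. Qed.

Lemma sqnormE v : sqnorm v = \sum_j v 0 j ^+ 2.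
Proof.
by rewrite /sqnorm /ip mulmx1 mxE; apply: eq_bigr => j _; rewrite mxE expr2.
Qed.

Lemma sqnorm_ge0 v : 0 <= sqnorm v.
Proof. by rewrite sqnormE sumr_ge0 // => j _; exact: sqr_ge0. Qed.

Lemma sqnorm_eq0 v : sqnorm v = 0 -> v = 0.
Proof.
rewrite sqnormE => /eqP; rewrite psumr_eq0 => [/allP v0|j _]; last exact: sqr_ge0.
apply/rowP => j; rewrite mxE; apply/eqP.
by rewrite -sqrf_eq0; apply: (implyP (v0 j (mem_index_enum j))).
Qed.

Lemma inner_product_mx1 : inner_product_mx (1%:M : 'M[R]_n).
Proof.
split=> [|v nz_v]; first exact: tr_scalar_mx.
rewrite lt_def sqnorm_ge0 andbT; apply: contra nz_v => /eqP.
by move/sqnorm_eq0 ->.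
Qed.

Lemma sqnormZ a v : sqnorm (a *: v) = a ^+ 2 * sqnorm v.
Proof. by rewrite /sqnorm ipZl ipZr mulrA expr2. Qed.

Lemma sqnormN v : sqnorm (- v) = sqnorm v.
Proof. by rewrite /sqnorm ipNl ipNr opprK. Qed.

Lemma sqnormB_sym u v : sqnorm (u - v) = sqnorm (v - u).
Proof. by rewrite -sqnormN opprB. Qed.

Lemma ip1_le u w : 2 * ip 1%:M u w <= sqnorm u + sqnorm w.
Proof.
have := sqnorm_ge0 (u - w).
by rewrite /sqnorm !(ipDl, ipDr, ipNl, ipNr) (ip1_sym w u); lra.
Qed.

Lemma sqnormD_le u v : sqnorm (u + v) <= 2 * sqnorm u + 2 * sqnorm v.
Proof.
have := ip1_le u v.
by rewrite /sqnorm !(ipDl, ipDr) (ip1_sym v u); lra.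
Qed.

(* Young's inequality [2 <u, v> <= s |u|^2 + |v|^2 / s] with [s = 1 / (1 + t)]. *)
Lemma sqnormB_ge t u v : 0 < t ->
  t / (1 + t) * sqnorm u - t * sqnorm v <= sqnorm (u - v).
Proof.
move=> t_gt0; have t1_gt0 : 0 < 1 + t by lra.
have sq_rest := sqnorm_ge0 (u - (1 + t) *: v).
have decomp : (1 + t) * sqnorm (u - v) = t * sqnorm u - t * (1 + t) * sqnorm v
                                        + sqnorm (u - (1 + t) *: v).
  by rewrite /sqnorm !(ipDl, ipDr, ipNl, ipNr, ipZl, ipZr) (ip1_sym v u); ring.
rewrite -(ler_pM2l t1_gt0) decomp mulrBr mulrA mulrCA divff ?gt_eqF //.
lra.
Qed.

Lemma sqnorm_mulmx_le M X : inner_product_mx M ->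
  exists2 c, 0 <= c & forall v, sqnorm (v *m X) <= c * ip M v v.
Proof.
move=> ipM; have M_unit := ip_unitmx ipM.
pose f j := (invmx M *m col j X)^T.
have ip_f v j : ip M v (f j) = (v *m X) 0 j.
  rewrite /ip /f trmxK mulmxA -(mulmxA v) mulmxV // mulmx1.
  by rewrite !mxE; apply: eq_bigr => k _; rewrite !mxE.
exists (\sum_j ip M (f j) (f j)); first by rewrite sumr_ge0 // => j _; exact: ip_ge0.
move=> v; rewrite sqnormE mulr_suml; apply: ler_sum => j _.
by rewrite mulrC -ip_f ip_Cauchy_Schwarz.
Qed.

Lemma ip_le_sqnorm M : exists2 c, 0 <= c & forall v, ip M v v <= c * sqnorm v.
Proof.
have [c c_ge0 le_c] := sqnorm_mulmx_le M inner_product_mx1.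
exists ((c + 1) / 2) => [|v]; first lra.
have ipE : ip M v v = ip 1%:M (v *m M) v by rewrite /ip mulmx1.
have := ip1_le (v *m M) v; have := le_c v; rewrite -ipE -/(sqnorm v).
have := sqnorm_ge0 v; lra.
Qed.

End InnerProduct.

Definition decays_under (R : realType) (n : nat) (S B : 'M[R]_n) (c r : R) :=
  forall v : 'rV[R]_n, (v <= B)%MS ->
    forall k, sqnorm (v *m S ^+ k) <= c * r ^+ k * sqnorm v.

Lemma stablemx_sum_seq (F : fieldType) (n : nat) (I : Type) (s : seq I)
    (P : pred I) (V_ : I -> 'M[F]_n) (f : 'M[F]_n) :
  (forall i, P i -> stablemx (V_ i) f) -> stablemx (\sum_(i <- s | P i) V_ i)%MS f.
Proof.
move=> stV; elim/big_ind: _ => [|X Y|//]; first exact: stable0mx.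
exact: stableDmx.
Qed.

Section EigenFamily.
Variables (R : realType) (n : nat) (S : 'M[R]_n) (V : R -> 'M[R]_n).
Hypothesis SV : forall b, V b *m S = b *: V b.
Implicit Types (v x y : 'rV[R]_n) (s : seq R).

Lemma eigen_family_mul b v : (v <= V b)%MS -> v *m S = b *: v.
Proof. by case/submxP => x ->; rewrite -mulmxA SV scalemxAr. Qed.

Lemma eigen_family_exp b v k : (v <= V b)%MS -> v *m S ^+ k = b ^+ k *: v.
Proof.
move=> vV; elim: k => [|k IHk]; first by rewrite !expr0 mulmx1 scale1r.
by rewrite exprSr -mulmxE mulmxA IHk -scalemxAl (eigen_family_mul vV) scalerA -exprSr.
Qed.

Lemma stablemx_eigen_family b c : stablemx (V b) (S - c%:M).
Proof. by rewrite mulmxBr SV mul_mx_scalar -scalerBl scalemx_sub. Qed.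

Definition annihilator s : 'M[R]_n := \prod_(c <- s) (S - c%:M).

Lemma annihilator_sum s v : (v <= \sum_(a <- s) V a)%MS -> v *m annihilator s = 0.
Proof.
elim: s v => [|b s IHs] v; first by rewrite big_nil submx0 => /eqP ->; rewrite mul0mx.
rewrite /annihilator !big_cons -mulmxE => /sub_addsmxP[[x y] /= ->].
have stab : stablemx (\sum_(a <- s) V a) (S - b%:M).
  exact: stablemx_sum_seq (fun a _ => stablemx_eigen_family a b).
rewrite mulmxA mulmxDl [X in X + _]mulmxBr (eigen_family_mul (submxMl x (V b))).
rewrite mul_mx_scalar subrr mulmxDl mul0mx add0r; apply: IHs.
exact: submx_trans (submxMr _ (submxMl y _)) stab.
Qed.

Lemma annihilator_eigen s b v : (v <= V b)%MS ->
  v *m annihilator s = (\prod_(c <- s) (b - c)) *: v.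
Proof.
move=> vV; elim: s => [|c s IHs]; first by rewrite /annihilator !big_nil mulmx1 scale1r.
rewrite /annihilator !big_cons -mulmxE mulmxA mulmxBr mul_mx_scalar.
by rewrite (eigen_family_mul vV) -scalerBl -scalemxAl -/(annihilator s) IHs scalerA.
Qed.

(* The [V b]-component is the image of [x + y] under the annihilator of [s],
   rescaled by [\prod_(c <- s) (b - c)]. *)
Lemma eigen_component_le b s : b \notin s ->
  exists2 D, 0 <= D & forall x y, (x <= V b)%MS ->
    (y <= \sum_(a <- s) V a)%MS -> sqnorm x <= D * sqnorm (x + y).
Proof.
move=> b_s; set P := \prod_(c <- s) (b - c).
have P_neq0 : P != 0.
  rewrite prodf_seq_neq0; apply/allP => c cs /=; rewrite subr_eq0.
  by apply: contraNneq b_s => ->.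
have [c c_ge0 le_c] := sqnorm_mulmx_le (annihilator s) (inner_product_mx1 R n).
exists (P^-1 ^+ 2 * c) => [|x y xV ys]; first by rewrite mulr_ge0 ?sqr_ge0.
have xE : x = P^-1 *: ((x + y) *m annihilator s).
  rewrite mulmxDl (annihilator_sum ys) addr0 (annihilator_eigen _ xV).
  by rewrite scalerA mulVf ?scale1r.
by rewrite {1}xE sqnormZ -[_ * c * _]mulrA ler_wpM2l ?sqr_ge0 ?le_c.
Qed.

Lemma eigen_family_decay s r : uniq s -> 0 <= r -> (forall b, b \in s -> b ^+ 2 <= r) ->
  exists2 c, 0 <= c & decays_under S (\sum_(a <- s) V a)%MS c r.
Proof.
move=> + r_ge0; elim: s => [_ _|b s IHs].
  exists 0 => // v; rewrite big_nil submx0 => /eqP -> k.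
  by rewrite mul0mx /sqnorm ip0l !mul0r.
rewrite cons_uniq => /andP[b_s uniq_s] le_r.
have [c' c'_ge0 decay_s] := IHs uniq_s (fun a a_s => le_r a (mem_behead (s := b :: s) a_s)).
have [D D_ge0 le_D] := eigen_component_le b_s.
exists (2 * D + 2 * c' * (2 + 2 * D)); first by rewrite addr_ge0 ?mulr_ge0 //; lra.
move=> v; rewrite big_cons => /sub_addsmxP[[x0 y0] /= ->] k.
set x := x0 *m V b; set y := y0 *m _.
have xV : (x <= V b)%MS by exact: submxMl.
have ys : (y <= \sum_(a <- s) V a)%MS by exact: submxMl.
have rk_ge0 : 0 <= r ^+ k by exact: exprn_ge0.
have x_le := le_D _ _ xV ys; have y_decay := decay_s _ ys k.
have xk_le : sqnorm (x *m S ^+ k) <= r ^+ k * sqnorm x.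
  rewrite (eigen_family_exp _ xV) sqnormZ -exprM mulnC exprM.
  by rewrite ler_wpM2r ?sqnorm_ge0 // lerXn2r ?nnegrE ?sqr_ge0 ?le_r ?mem_head.
have y_le : sqnorm y <= (2 + 2 * D) * sqnorm (x + y).
  have := sqnormD_le (x + y) (- x); rewrite sqnormN addrC addKr; lra.
have := ler_wpM2l rk_ge0 x_le; have := ler_wpM2l (mulr_ge0 c'_ge0 rk_ge0) y_le.
have := sqnormD_le (x *m S ^+ k) (y *m S ^+ k); rewrite -mulmxDl.
lra.
Qed.

End EigenFamily.

Lemma expr_le_eventually (R : realType) (r d : R) : 0 <= r -> r < 1 -> 0 < d ->
  exists K : nat, forall k, (K <= k)%N -> r ^+ k <= d.
Proof.
move=> r_ge0 r_lt1 d_gt0; have normr_lt1 : `|r| < 1 by rewrite ger0_norm.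
have [K _ le_K] := iffLR (cvgrPdist_lt _ _) (cvg_expr normr_lt1) d d_gt0.
exists K => k /le_K /=; rewrite sub0r normrN ger0_norm ?exprn_ge0 //.
exact: ltW.
Qed.

Lemma sqr_lt1_bound (R : realType) (s : seq R) : (forall b, b \in s -> b ^+ 2 < 1) ->
  exists r, [/\ 0 <= r, r < 1 & forall b, b \in s -> b ^+ 2 <= r].
Proof.
elim: s => [|b s IHs] lt1; first by exists 0; split => //; lra.
have [r [r_ge0 r_lt1 le_r]] := IHs (fun a a_s => lt1 a (mem_behead (s := b :: s) a_s)).
exists (Num.max (b ^+ 2) r); split.
- by rewrite le_max r_ge0 orbT.
- by rewrite gt_max r_lt1 lt1 ?mem_head.
- move=> a; rewrite inE => /predU1P[->|a_s]; first by rewrite le_max lexx.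
  by rewrite le_max le_r ?orbT.
Qed.

Section MatrixFacts.
Variables (F : fieldType) (n : nat).
Implicit Types (A B V W f : 'M[F]_n).

Lemma mulmx_exp_invmx f k : f \in unitmx -> f ^+ k *m invmx f ^+ k = 1%:M.
Proof.
move=> f_unit; elim: k => [|k IHk]; first by rewrite !expr0 mulmx1.
rewrite exprS exprSr -!mulmxE -mulmxA (mulmxA (f ^+ k)) IHk mul1mx.
exact: mulmxV.
Qed.

Lemma stablemxX V f k : stablemx V f -> stablemx V (f ^+ k).
Proof.
move=> stVf; elim: k => [|k IHk]; first by rewrite expr0 mulmx1.
by rewrite exprSr -mulmxE stablemxM.
Qed.

Lemma stablemx_invmx V f : f \in unitmx -> stablemx V f -> stablemx V (invmx f).
Proof.
move=> f_unit stVf; have sVVf : (V <= V *m f)%MS.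
  by rewrite -(mxrank_leqif_sup stVf).2 mxrankMfree ?row_free_unit.
by rewrite -[X in (_ <= X)%MS](mulmxK f_unit V) submxMr.
Qed.

Lemma proj_mx_comm A B f : (A :&: B = 0)%MS -> (1%:M <= A + B)%MS ->
  stablemx A f -> stablemx B f -> comm_mx (proj_mx A B) f.
Proof.
move=> capAB fullAB stAf stBf; set P := proj_mx A B; set P' := proj_mx B A.
have sPA : (P <= A)%MS by rewrite -[P]mul1mx proj_mx_sub.
have sP'B : (P' <= B)%MS by rewrite -[P']mul1mx proj_mx_sub.
have splitP : P + P' = 1%:M by rewrite -[P]mul1mx -[P']mul1mx add_proj_mx.
rewrite /comm_mx -{2}[f]mul1mx -splitP !mulmxDl.
rewrite (proj_mx_id capAB (submx_trans (submxMr f sPA) stAf)).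
by rewrite (proj_mx_0 capAB (submx_trans (submxMr f sP'B) stBf)) addr0.
Qed.

Lemma addsmx_full_of_capmx0 A B : (A :&: B = 0)%MS -> (\rank A + \rank B)%N = n ->
  (A + B == 1%:M)%MS.
Proof.
move=> capAB rkAB; rewrite -(mxrank_leqif_eq (submx1 _)).2 mxrank1.
by rewrite mxrank_disjoint_sum // rkAB.
Qed.

End MatrixFacts.

Section Cones.
Variables (R : realType) (n : nat).
Implicit Types (A B W S : 'M[R]_n) (u v w x y z : 'rV[R]_n).

(* Since [W] meets [B] trivially, the projection onto [A] is injective on [W],
   so the [B]-component is a linear function of the [A]-component there. *)
Lemma proj_mx_graph_bound A B W : (A :&: B = 0)%MS -> (1%:M <= A + B)%MS ->
  (forall z, (z <= W)%MS -> (z <= B)%MS -> z = 0) ->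
  exists2 a, 0 <= a & forall z, (z <= W)%MS ->
    sqnorm (z *m proj_mx B A) <= a * sqnorm (z *m proj_mx A B).
Proof.
move=> capAB fullAB capWB; set pA := proj_mx A B; set pB := proj_mx B A.
set L := pinvmx (W *m pA) *m W.
have [a a_ge0 le_a] := sqnorm_mulmx_le (L *m pB) (inner_product_mx1 R n).
exists a => // z zW; suff zE : z = z *m pA *m L by rewrite {1}zE -mulmxA le_a.
have zpA_W : (z *m pA <= W *m pA)%MS by exact: submxMr.
set d := z - z *m pA *m L.
have dW : (d <= W)%MS by rewrite addmx_sub ?eqmx_opp // mulmxA submxMl.
have dpA0 : d *m pA = 0.
  have LpA : z *m pA *m L *m pA = z *m pA by rewrite -{2}(mulmxKpV zpA_W) /L !mulmxA.
  by rewrite mulmxBl LpA subrr.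
have dB : (d <= B)%MS.
  by rewrite -(add_proj_mx capAB (submx_trans (submx1 d) fullAB)) -/pA dpA0 add0r proj_mx_sub.
by apply/eqP; rewrite -subr_eq0 -/d (capWB d dW dB).
Qed.

(* A vector of both spaces shrinks by [c' r^k * c r^k] on the round trip
   [v -> v S^k -> v]. *)
Lemma capmx_eq0_of_decay A B S c c' r : S \in unitmx -> stablemx A S ->
  0 <= c -> 0 <= c' -> 0 <= r -> r < 1 ->
  decays_under S B c r -> decays_under (invmx S) A c' r -> (A :&: B = 0)%MS.
Proof.
move=> S_unit stAS c_ge0 c'_ge0 r_ge0 r_lt1 decB decA; apply/eqP/rowV0P => v.
rewrite sub_capmx => /andP[vA vB]; apply: sqnorm_eq0; apply/eqP.
rewrite eq_le sqnorm_ge0 andbT.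
set d := (c * c' + 1)^-1; have d_gt0 : 0 < d by rewrite invr_gt0; nra.
have cc'd_lt1 : c * c' * d < 1.
  by rewrite -[X in _ < X](mulfV (lt0r_neq0 (_ : 0 < c * c' + 1))) ?ltr_pM2r; nra.
have [k le_k] := expr_le_eventually r_ge0 r_lt1 d_gt0; have rk_le := le_k k (leqnn k).
have rk_ge0 : 0 <= r ^+ k by exact: exprn_ge0.
have rk_le1 : r ^+ k <= 1 by exact: exprn_ile1 (ltW r_lt1).
have vkA : (v *m S ^+ k <= A)%MS by exact: submx_trans (submxMr _ vA) (stablemxX k stAS).
have vE : v = v *m S ^+ k *m invmx S ^+ k by rewrite -mulmxA mulmx_exp_invmx ?mulmx1.
have back := decA _ vkA k; rewrite -vE in back.
have forth := ler_wpM2l (mulr_ge0 c'_ge0 rk_ge0) (decB v vB k).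
have rk2_le : r ^+ k * r ^+ k <= d by nra.
have := ler_wpM2r (sqnorm_ge0 v) (ler_wpM2l (mulr_ge0 c_ge0 c'_ge0) rk2_le).
have := sqnorm_ge0 v; nra.
Qed.

(* For [u = z S^k] with [z] in [W]: the [B]-part of [z] decays under [S^k],
   it is controlled by the [A]-part of [z], and [S^-k] shrinks the [A]-part
   of [u] back to that of [z]. *)
Lemma cone_estimate A B W S c c' r : (A :&: B = 0)%MS -> (1%:M <= A + B)%MS ->
  S \in unitmx -> stablemx A S -> stablemx B S ->
  0 <= c -> 0 <= c' -> 0 <= r -> r <= 1 ->
  decays_under S B c r -> decays_under (invmx S) A c' r ->
  (forall z, (z <= W)%MS -> (z <= B)%MS -> z = 0) ->
  exists2 kappa, 0 <= kappa & forall k u, (u <= W *m S ^+ k)%MS ->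
    sqnorm (u *m proj_mx B A) <= kappa * r ^+ k * sqnorm (u *m proj_mx A B).
Proof.
move=> capAB fullAB S_unit stAS stBS c_ge0 c'_ge0 r_ge0 r_le1 decB decA capWB.
have capBA : (B :&: A = 0)%MS by rewrite capmxC.
have fullBA : (1%:M <= B + A)%MS by rewrite addsmxC.
set pA := proj_mx A B; set pB := proj_mx B A.
have [a a_ge0 le_a] := proj_mx_graph_bound capAB fullAB capWB.
exists (c * a * c') => [|k _ /submxP[x ->]]; first by rewrite !mulr_ge0.
rewrite !(mulmxA x W); set z := x *m W; have zW : (z <= W)%MS by exact: submxMl.
have rk_ge0 : 0 <= r ^+ k by exact: exprn_ge0.
have rk_le1 : r ^+ k <= 1 by exact: exprn_ile1.
have commA : comm_mx pA (S ^+ k) by apply: proj_mx_comm; rewrite ?stablemxX.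
have commB : comm_mx pB (S ^+ k) by apply: proj_mx_comm; rewrite ?stablemxX.
have decay_pB : sqnorm (z *m S ^+ k *m pB) <= c * r ^+ k * sqnorm (z *m pB).
  by rewrite -(mulmxA z) -commB (mulmxA z) decB ?proj_mx_sub.
have return_pA : sqnorm (z *m pA) <= c' * sqnorm (z *m S ^+ k *m pA).
  have zpA_E : z *m pA = z *m S ^+ k *m pA *m invmx S ^+ k.
    rewrite -(mulmxA z) -commA (mulmxA z) -(mulmxA (z *m pA)).
    by rewrite mulmx_exp_invmx ?mulmx1.
  rewrite {1}zpA_E; apply: le_trans (decA _ (proj_mx_sub _ _ _) k) _.
  by rewrite ler_wpM2r ?sqnorm_ge0 // ler_piMr.
have := ler_wpM2l (mulr_ge0 c_ge0 rk_ge0) (le_a z zW); rewrite -/pA -/pB.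
have := ler_wpM2l (mulr_ge0 (mulr_ge0 c_ge0 rk_ge0) a_ge0) return_pA.
nra.
Qed.

End Cones.

Section ConeSeparation.
Variables (R : realType) (n : nat).

Lemma cone_separation (B : R) : 0 <= B ->
  exists2 mu, 0 < mu & exists2 gamma, 0 < gamma &
    forall (al be : R) (x1 y1 x2 y2 : 'rV[R]_n), al <= mu -> be <= B ->
      sqnorm y1 <= al * sqnorm x1 -> sqnorm x2 <= be * sqnorm y2 ->
      gamma * (sqnorm x1 + sqnorm y1 + sqnorm x2 + sqnorm y2)
        <= sqnorm (x1 - x2) + sqnorm (y1 - y2).
Proof.
move=> B_ge0; set eta := (4 * (B + 1))^-1.
have eta_gt0 : 0 < eta by rewrite invr_gt0; lra.
have etaB : eta * (B + 1) = 1 / 4 by rewrite /eta; field; rewrite gt_eqF //; lra.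
exists (eta / 4); first lra.
exists (eta / 8) => [|al be x1 y1 x2 y2 al_le be_le y1_le x2_le]; first lra.
have p_ge0 := sqnorm_ge0 x1; have q_ge0 := sqnorm_ge0 y2.
have Y_ge0 := sqnorm_ge0 y1; have X_ge0 := sqnorm_ge0 x2.
have Y_le : sqnorm y1 <= eta / 4 * sqnorm x1.
  exact: le_trans y1_le (ler_wpM2r p_ge0 al_le).
have X_le : sqnorm x2 <= B * sqnorm y2.
  exact: le_trans x2_le (ler_wpM2r q_ge0 be_le).
have young_x := sqnormB_ge x1 x2 eta_gt0.
have young_y := sqnormB_ge y2 y1 ltr01.
rewrite sqnormB_sym mul1r (_ : 1 + 1 = 2 :> R) // in young_y.
have eta_le1 : eta <= 1 by nra.
have eta_half : eta / 2 * sqnorm x1 <= eta / (1 + eta) * sqnorm x1.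
  by rewrite ler_wpM2r // ler_wpM2l ?(ltW eta_gt0) // lef_pV2 ?posrE //; lra.
have etaX : eta * sqnorm x2 <= sqnorm y2 / 4 - eta * sqnorm y2.
  have -> : sqnorm y2 / 4 - eta * sqnorm y2 = eta * (B * sqnorm y2).
    have -> : sqnorm y2 / 4 = eta * (B + 1) * sqnorm y2 by rewrite etaB; ring.
    ring.
  by rewrite ler_wpM2l ?(ltW eta_gt0).
have etaY : eta * sqnorm y1 <= eta * sqnorm x1.
  by rewrite ler_wpM2l ?(ltW eta_gt0) //; nra.
have := mulr_ge0 (ltW eta_gt0) q_ge0.
rewrite !mulrDr; lra.
Qed.

End ConeSeparation.

Lemma acos_le_acos (R : realType) (x y : R) : -1 <= x -> x <= y -> y <= 1 ->
  acos y <= acos x.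
Proof.
move=> x_ge x_le_y y_le; have x_in : x \in `[(-1), 1] by rewrite in_itv /=; lra.
have y_in : y \in `[(-1), 1] by rewrite in_itv /=; lra.
have acos_in (z : R) : z \in `[(-1), 1] -> acos z \in `[0, pi].
  by rewrite !in_itv /= => zI; rewrite acos_ge0 ?acos_lepi.
by rewrite leNgt -(ltr_cos (acos_in x x_in) (acos_in y y_in)) !acosK // -leNgt.
Qed.

Lemma angle_ge_acos (R : realType) (n : nat) (M : 'M[R]_n) (u w : 'rV[R]_n) (delta : R) :
  inner_product_mx M -> 0 <= delta -> ip M u u = 1 -> ip M w w = 1 ->
  delta * (ip M u u + ip M w w) <= ip M (u - w) (u - w) ->
  acos (1 - Num.min delta 1) <= angle M u w.
Proof.
move=> ipM delta_ge0 uu1 ww1; have := ip_Cauchy_Schwarz u w ipM.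
rewrite !(ipDl, ipDr, ipNl, ipNr) (ip_sym w u ipM.1) uu1 ww1 mulr1 /angle.
set i := ip M u w => i2_le1 sep.
have min_le : Num.min delta 1 <= delta by rewrite ge_min lexx.
have min_ge0 : 0 <= Num.min delta 1 by rewrite le_min delta_ge0 ler01.
apply: acos_le_acos; nra.
Qed.

Lemma capmx_eq0_of_separation (R : realType) (n : nat) (U V : 'M[R]_n) (delta : R) :
  0 < delta ->
  (forall u w : 'rV[R]_n, (u <= U)%MS -> (w <= V)%MS ->
     delta * (sqnorm u + sqnorm w) <= sqnorm (u - w)) ->
  (U :&: V = 0)%MS.
Proof.
move=> delta_gt0 sep; apply/eqP/rowV0P => v.
rewrite sub_capmx => /andP[vU vV]; apply: sqnorm_eq0.
have := sep v v vU vV; rewrite subrr /sqnorm ip0l -/(sqnorm v).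
have := sqnorm_ge0 v; nra.
Qed.

Section HyperbolicSplitting.
Variables (R : realType) (n : nat) (T E C Wp Wm : 'M[R]_n) (cC cE r : R).
Hypothesis T_unit : T \in unitmx.
Hypotheses (stET : stablemx E T) (stCT : stablemx C T).
Hypothesis fullEC : (1%:M <= E + C)%MS.
Hypotheses (cC_ge0 : 0 <= cC) (cE_ge0 : 0 <= cE) (r_ge0 : 0 <= r) (r_lt1 : r < 1).
Hypotheses (decC : decays_under T C cC r) (decE : decays_under (invmx T) E cE r).
Hypothesis capWpC : forall v : 'rV[R]_n, (v <= Wp)%MS -> (v <= C)%MS -> v = 0.
Hypothesis capWmE : forall v : 'rV[R]_n, (v <= Wm)%MS -> (v <= E)%MS -> v = 0.

Let capEC : (E :&: C = 0)%MS.
Proof. exact: capmx_eq0_of_decay T_unit stET cC_ge0 cE_ge0 r_ge0 r_lt1 decC decE. Qed.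

Let split_sqnorm (v : 'rV[R]_n) := sqnorm (v *m proj_mx E C) + sqnorm (v *m proj_mx C E).

Let cone_Wp : exists2 kappa, 0 <= kappa & forall k u, (u <= Wp *m T ^+ k)%MS ->
  sqnorm (u *m proj_mx C E) <= kappa * r ^+ k * sqnorm (u *m proj_mx E C).
Proof.
exact: cone_estimate capEC fullEC T_unit stET stCT cC_ge0 cE_ge0 r_ge0 (ltW r_lt1)
  decC decE capWpC.
Qed.

Let cone_Wm : exists2 kappa, 0 <= kappa & forall k w, (w <= Wm *m invmx T ^+ k)%MS ->
  sqnorm (w *m proj_mx E C) <= kappa * r ^+ k * sqnorm (w *m proj_mx C E).
Proof.
have capCE : (C :&: E = 0)%MS by rewrite capmxC.
have fullCE : (1%:M <= C + E)%MS by rewrite addsmxC.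
have decC' : decays_under (invmx (invmx T)) C cC r by rewrite invmxK.
apply: cone_estimate capCE fullCE _ _ _ cE_ge0 cC_ge0 r_ge0 (ltW r_lt1) decE decC' capWmE.
- by rewrite unitmx_inv.
- exact: stablemx_invmx.
- exact: stablemx_invmx.
Qed.

Let split_sqnorm_separation : exists K, exists2 gamma, 0 < gamma &
  forall kp km, (K <= kp + km)%N -> forall u w : 'rV[R]_n,
    (u <= Wp *m T ^+ kp)%MS -> (w <= Wm *m invmx T ^+ km)%MS ->
    gamma * (split_sqnorm u + split_sqnorm w) <= split_sqnorm (u - w).
Proof.
have [kp_ kp_ge0 coneU] := cone_Wp; have [km_ km_ge0 coneW] := cone_Wm.
set B := kp_ + km_; have B_ge0 : 0 <= B by rewrite addr_ge0.
have [mu mu_gt0 [gamma gamma_gt0 sep]] := cone_separation n B_ge0.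
have d_gt0 : 0 < mu / (B + 1) by rewrite divr_gt0 //; lra.
have d_mu : mu / (B + 1) * (B + 1) = mu by rewrite divfK // gt_eqF //; lra.
have [K0 le_K0] := expr_le_eventually r_ge0 r_lt1 d_gt0.
have rk_ge0 k : 0 <= r ^+ k by exact: exprn_ge0.
have rk_le1 k : r ^+ k <= 1 by exact: exprn_ile1 (ltW r_lt1).
have small k kappa : (K0 <= k)%N -> 0 <= kappa <= B -> kappa * r ^+ k <= mu.
  move=> /le_K0 rk_le /andP[kappa_ge0 kappa_le].
  apply: le_trans (ler_wpM2l kappa_ge0 rk_le) _; nra.
have bounded k kappa : 0 <= kappa <= B -> kappa * r ^+ k <= B.
  by case/andP=> kappa_ge0 kappa_le; have := rk_le1 k; have := rk_ge0 k; nra.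
exists (K0 + K0)%N, gamma => // kp km le_K u w uW wW.
rewrite /split_sqnorm !mulmxBl.
have kp_B : 0 <= kp_ <= B by rewrite kp_ge0 ler_wpDr.
have km_B : 0 <= km_ <= B by rewrite km_ge0 ler_wpDl.
have [le_kp|lt_kp] := leqP K0 kp.
  have := sep _ _ _ _ _ _ (small _ _ le_kp kp_B) (bounded km _ km_B)
    (coneU _ _ uW) (coneW _ _ wW).
  lra.
have le_km : (K0 <= km)%N.
  by rewrite -(leq_add2l K0) (leq_trans le_K) // leq_add2r ltnW.
have := sep _ _ _ _ _ _ (small _ _ le_km km_B) (bounded kp _ kp_B)
  (coneW _ _ wW) (coneU _ _ uW).
rewrite (sqnormB_sym (w *m _)) (sqnormB_sym (w *m proj_mx E C)); lra.
Qed.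

Let split_sqnorm_le_ip M : inner_product_mx M ->
  exists2 a, 0 < a & forall v, split_sqnorm v <= a * ip M v v.
Proof.
move=> ipM; have [aE aE_ge0 leE] := sqnorm_mulmx_le (proj_mx E C) ipM.
have [aC aC_ge0 leC] := sqnorm_mulmx_le (proj_mx C E) ipM.
exists (aE + aC + 1) => [|v]; first lra.
have := leE v; have := leC v; have := ip_ge0 v ipM; rewrite /split_sqnorm; lra.
Qed.

Let ip_le_split_sqnorm M : exists2 b, 0 < b & forall v, ip M v v <= b * split_sqnorm v.
Proof.
have [b b_ge0 le_b] := ip_le_sqnorm M.
exists (2 * b + 1) => [|v]; first lra.
have capCE : (C :&: E = 0)%MS by rewrite capmxC.
have := sqnormD_le (v *m proj_mx E C) (v *m proj_mx C E).
rewrite add_proj_mx ?(submx_trans (submx1 v)) // => le_v.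
have := ler_wpM2l b_ge0 le_v; have := le_b v.
have := sqnorm_ge0 (v *m proj_mx E C); have := sqnorm_ge0 (v *m proj_mx C E).
rewrite /split_sqnorm; nra.
Qed.

Lemma hyperbolic_transversality : exists K, forall M, inner_product_mx M ->
  exists2 delta, 0 < delta & forall kp km, (K <= kp + km)%N ->
    forall u w : 'rV[R]_n, (u <= Wp *m T ^+ kp)%MS -> (w <= Wm *m invmx T ^+ km)%MS ->
    delta * (ip M u u + ip M w w) <= ip M (u - w) (u - w).
Proof.
have [K [gamma gamma_gt0 sep]] := split_sqnorm_separation.
exists K => M ipM; have [a a_gt0 le_a] := split_sqnorm_le_ip ipM.
have [b b_gt0 le_b] := ip_le_split_sqnorm M.
exists (gamma / (a * b)) => [|kp km le_K u w uW wW]; first by rewrite divr_gt0 ?mulr_gt0.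
rewrite mulrAC ler_pdivrMr ?mulr_gt0 //.
have := sep _ _ le_K _ _ uW wW; have := le_a (u - w); have := le_b u; have := le_b w.
nra.
Qed.

End HyperbolicSplitting.

Lemma eigen_rate (R : realType) (s : seq R) : exists r, [/\ 0 <= r, r < 1,
  forall a, a \in s -> `|a| < 1 -> a ^+ 2 <= r &
  forall a, a \in s -> 1 < `|a| -> a^-1 ^+ 2 <= r].
Proof.
have [|r [r_ge0 r_lt1 le_r]] :=
  @sqr_lt1_bound _ ([seq a <- s | `|a| < 1] ++ map GRing.inv [seq a <- s | 1 < `|a|]).
  move=> b; rewrite -(real_normK (num_real b)) mem_cat => /orP[|/mapP[a]].
    by rewrite mem_filter => /andP[b_lt1 _]; rewrite exprn_ilt1.
  rewrite mem_filter => /andP[a_gt1 _] ->.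
  by rewrite exprn_ilt1 // normfV invf_lt1 // (lt_trans ltr01).
exists r; split=> // a a_s a_lt; apply: le_r; rewrite mem_cat.
  by rewrite mem_filter a_lt a_s.
by rewrite map_f ?orbT // mem_filter a_lt a_s.
Qed.

Lemma eigenspace_invmx (R : fieldType) (n : nat) (T : 'M[R]_n) (b : R) :
  T \in unitmx -> eigenspace T b^-1 *m invmx T = b *: eigenspace T b^-1.
Proof.
move=> T_unit; set W := eigenspace T b^-1.
have /eigenspaceP WT : (W <= eigenspace T b^-1)%MS by [].
suff WE : W = b *: (W *m T) by rewrite {1}WE -scalemxAl mulmxK.
have [b0|b_neq0] := eqVneq b 0; last by rewrite WT scalerA mulfV ?scale1r.
move: WT; rewrite b0 invr0 !scale0r => WT0.
by rewrite -[W](mulmxK T_unit) WT0 mul0mx.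
Qed.

Definition eigen_sum (R : fieldType) (n : nat) (T : 'M[R]_n) (P : pred R) (s : seq R) :=
  (\sum_(a <- [seq a <- undup s | P a]) eigenspace T a)%MS.

Section EigenSums.
Variables (R : realType) (n : nat) (T : 'M[R]_n) (s : seq R).

Lemma in_eigen_sum_of (P : pred R) (v : 'rV[R]_n) :
  (v <= eigen_sum T P s)%MS -> in_eigen_sum P T v.
Proof. by exists [seq a <- undup s | P a]; split; first exact: filter_all. Qed.

Lemma stablemx_eigen_sum (P : pred R) : stablemx (eigen_sum T P s) T.
Proof. by apply: stablemx_sum_seq => a _; exact: comm_mx_stable_eigenspace. Qed.

Lemma eigenspace_sub_eigen_sum (P : pred R) a : a \in s -> P a ->
  (eigenspace T a <= eigen_sum T P s)%MS.
Proof.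
move=> a_s Pa; rewrite /eigen_sum (big_rem a) ?addsmxSl //.
by rewrite mem_filter Pa mem_undup.
Qed.

Definition expanding_sum := eigen_sum T (fun a => 1 < `|a|) s.
Definition contracting_sum := eigen_sum T (fun a => `|a| < 1) s.

Lemma eigen_sum_full : (\sum_(a <- s) eigenspace T a == 1%:M)%MS ->
  (forall a, eigenvalue T a -> a != 1 /\ a != -1) ->
  (1%:M <= expanding_sum + contracting_sum)%MS.
Proof.
case/andP=> _ full eig1; apply: submx_trans full _; rewrite big_seq.
elim/big_ind: _ => [|X Y sX sY|a a_s]; [exact: sub0mx|by rewrite addsmx_sub sX|].
have [a_lt1|a_gt1|a_eq1] := ltrgtP `|a| 1.
- exact/(submx_trans _ (addsmxSr _ _))/eigenspace_sub_eigen_sum.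
- exact/(submx_trans _ (addsmxSl _ _))/eigenspace_sub_eigen_sum.
have : ~~ eigenvalue T a.
  apply/negP => /eig1[a_neq1 a_neqN1]; move/eqP: a_eq1.
  by rewrite eqr_norml => /andP[/orP[] /eqP a1 _];
    [move: a_neq1|move: a_neqN1]; rewrite a1 eqxx.
by rewrite negbK => /eqP ->; rewrite sub0mx.
Qed.

Lemma contracting_sum_decay r : 0 <= r ->
  (forall a, a \in s -> `|a| < 1 -> a ^+ 2 <= r) ->
  exists2 c, 0 <= c & decays_under T contracting_sum c r.
Proof.
move=> r_ge0 le_r; apply: eigen_family_decay r_ge0 _ => [b||b].
- exact/eigenspaceP.
- by rewrite filter_uniq ?undup_uniq.
by rewrite mem_filter mem_undup => /andP[b_lt1 b_s]; apply: le_r.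
Qed.

Lemma expanding_sum_decay r : T \in unitmx -> 0 <= r ->
  (forall a, a \in s -> 1 < `|a| -> a^-1 ^+ 2 <= r) ->
  exists2 c, 0 <= c & decays_under (invmx T) expanding_sum c r.
Proof.
move=> T_unit r_ge0 le_r; set l := [seq a <- undup s | 1 < `|a|].
have uniq_l : uniq (map GRing.inv l).
  by rewrite map_inj_uniq ?filter_uniq ?undup_uniq //; exact: invr_inj.
have le_r' b : b \in map GRing.inv l -> b ^+ 2 <= r.
  by case/mapP=> a; rewrite mem_filter mem_undup => /andP[a_gt1 a_s] ->; apply: le_r.
have [c c_ge0 decay] :=
  eigen_family_decay (fun b => eigenspace_invmx b T_unit) uniq_l r_ge0 le_r'.
exists c => //; move: decay; rewrite big_map.
by under eq_bigr do rewrite invrK.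
Qed.

End EigenSums.

Unset Implicit Arguments.
Theorem lemma8p2 (R : realType) (n : nat) (T : 'M[R]_n) (Wp Wm : 'M[R]_n)
  (hTinv : T \in unitmx)
  (hdiag : exists s : seq R, (\sum_(a <- s) eigenspace T a == (1%:M : 'M[R]_n))%MS)
  (heig : forall a : R, eigenvalue T a -> a != 1 /\ a != -1)
  (hdim : (\rank Wp + \rank Wm)%N = n)
  (hWp : forall v : 'rV[R]_n, (v <= Wp)%MS -> in_contracting T v -> v = 0)
  (hWm : forall v : 'rV[R]_n, (v <= Wm)%MS -> in_expanding T v -> v = 0) :
  exists K : nat,
    (forall kp km : nat, (K <= kp + km)%N ->
       ((Wp *m T ^+ kp + Wm *m (invmx T) ^+ km) == (1%:M : 'M[R]_n))%MS /\
       ((Wp *m T ^+ kp :&: Wm *m (invmx T) ^+ km) == (0 : 'M[R]_n))%MS) /\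
    (forall M : 'M[R]_n, inner_product_mx M ->
       exists2 eps : R, 0 < eps &
         forall kp km : nat, (K <= kp + km)%N ->
         forall u w : 'rV[R]_n,
           (u <= Wp *m T ^+ kp)%MS -> (w <= Wm *m (invmx T) ^+ km)%MS ->
           ip M u u = 1 -> ip M w w = 1 ->
           eps <= angle M u w).
Proof.
have [s sum_full] := hdiag.
have [r [r_ge0 r_lt1 rateC rateE]] := eigen_rate s.
have [cC cC_ge0 decC] := contracting_sum_decay T r_ge0 rateC.
have [cE cE_ge0 decE] := expanding_sum_decay hTinv r_ge0 rateE.
have [K transverse] := hyperbolic_transversality hTinv (stablemx_eigen_sum T s _)
  (stablemx_eigen_sum T s _) (eigen_sum_full sum_full heig) cC_ge0 cE_ge0 r_ge0 r_lt1
  decC decE (fun v vWp vC => hWp v vWp (in_eigen_sum_of vC))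
  (fun v vWm vE => hWm v vWm (in_eigen_sum_of vE)).
exists K; split=> [kp km le_K|M ipM].
  have [delta delta_gt0 sep] := transverse _ (inner_product_mx1 R n).
  have cap0 := capmx_eq0_of_separation delta_gt0 (sep kp km le_K).
  split; last by rewrite cap0 sub0mx.
  apply: addsmx_full_of_capmx0 cap0 _; rewrite !mxrankMfree // row_free_unit.
  - exact: (mulmx1_unit (mulmx_exp_invmx km hTinv)).2.
  - exact: (mulmx1_unit (mulmx_exp_invmx kp hTinv)).1.
have [delta delta_gt0 sep] := transverse M ipM.
have min_gt0 : 0 < Num.min delta 1 by rewrite lt_min delta_gt0 ltr01.
have min_le1 : Num.min delta 1 <= 1 by rewrite ge_min lexx orbT.
exists (acos (1 - Num.min delta 1)) => [|kp km le_K u w uW wW uu ww].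
  by apply: acos_gt0; lra.
exact: angle_ge_acos ipM (ltW delta_gt0) uu ww (sep _ _ le_K _ _ uW wW).
Qed.
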